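(* Let $n\in\mathbb{N}$ and let $(Q^n,\sigma)$ be the $n$-dimensional hypercube graph with a sign $\sigma$ having precisely one negative edge. Then $(Q^n,\sigma)$ satisfies $CD^\sigma(0,\infty)$ if and only if $n\in\{1,2\}$.
   Context: $Q^n$ is the hypercube graph on $\{0,1\}^n$, two vertices adjacent iff they differ in exactly one coordinate; $d_x$ denotes degree. A sign is $\sigma:E\to\{\pm1\}$, $\sigma_{xy}=\sigma(\{x,y\})$. Signed Laplacian $\Delta^{\sigma}f(x)=\frac{1}{d_x}\sum_{y\sim x}(\sigma_{xy}f(y)-f(x))$; $\Delta$ is the case $\sigma\equiv+1$. $\Gamma^{\sigma}(f,g)=\frac12\{\Delta(fg)-g\Delta^{\sigma}f-f\Delta^{\sigma}g\}$, $\Gamma_2^{\sigma}(f,g)=\frac12\{\Delta\Gamma^{\sigma}(f,g)-\Gamma^{\sigma}(g,\Delta^{\sigma}f)-\Gamma^{\sigma}(f,\Delta^{\sigma}g)\}$. $(G,\sigma)$ satisfies $CD^\sigma(K,\infty)$ if $\Gamma_2^\sigma(f,f)(x)\ge K\Gamma^\sigma(f,f)(x)$ for all $f:V\to\mathbb{R}$ and all vertices $x$. *)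

From mathcomp Require Import all_boot all_order all_algebra.
From mathcomp Require Import reals.
Set Implicit Arguments. Unset Strict Implicit. Unset Printing Implicit Defensive.
Import Order.TTheory GRing.Theory Num.Theory.
Local Open Scope ring_scope.

Section Hypercube.
Variable R : realType.
Variable n : nat.

Definition hcV := {ffun 'I_n -> bool}.

Definition hc_adj (x y : hcV) : bool := #|[set i | x i != y i]| == 1%N.

Definition hc_edges : {set {set hcV}} :=
  [set e | [exists x, exists y, hc_adj x y && (e == [set x; y])]].

Definition hc_deg (x : hcV) : nat := #|[set y | hc_adj x y]|.

(* a sign is a function on edges; sigma_xy = sigma [set x; y] *)
Definition is_sign (sigma : {set hcV} -> R) : Prop :=
  forall e, e \in hc_edges -> sigma e = 1 \/ sigma e = -1.

Definition slap (sigma : {set hcV} -> R) (f : hcV -> R) (x : hcV) : R :=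
  (hc_deg x)%:R^-1 * \sum_(y | hc_adj x y) (sigma [set x; y] * f y - f x).

Definition lap (f : hcV -> R) (x : hcV) : R := slap (fun _ => 1) f x.

Definition sGamma (sigma : {set hcV} -> R) (f g : hcV -> R) (x : hcV) : R :=
  2^-1 * (lap (fun z => f z * g z) x - g x * slap sigma f x - f x * slap sigma g x).

Definition sGamma2 (sigma : {set hcV} -> R) (f g : hcV -> R) (x : hcV) : R :=
  2^-1 * (lap (sGamma sigma f g) x - sGamma sigma g (slap sigma f) x
          - sGamma sigma f (slap sigma g) x).

Definition CDsigma (sigma : {set hcV} -> R) (K : R) : Prop :=
  forall (f : hcV -> R) (x : hcV), sGamma2 sigma f f x >= K * sGamma sigma f f x.

End Hypercube.

From mathcomp Require Import all_boot all_order all_algebra.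
From mathcomp Require Import reals ring lra zify.
Import Order.TTheory GRing.Theory Num.Theory.
Local Open Scope ring_scope.
Set Implicit Arguments. Unset Strict Implicit. Unset Printing Implicit Defensive.

(* For n >= 3, the distance d from an endpoint a of the negative edge violates
   CD^sigma(0,oo) at a.  Both Delta^sigma d = (n-2)/n and Gamma^sigma(d,d) = 1/2 are
   constant on the unit ball around a, so Gamma_2^sigma(d,d)(a) reduces to
   - Gamma^sigma(d, Delta^sigma d)(a); in that sum only the negative edge contributes,
   which gives Gamma_2^sigma(d,d)(a) = -(n-2)/n^2 < 0.
   For n <= 2, Gamma_2^sigma(f,f)(x) is an explicit quadratic form in the values of f,
   and it is a sum of squares for every sign sigma. *)

Section Hypercube.
Variable n : nat.
Implicit Types (x y : hcV n) (i j : 'I_n).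

Definition flip x i : hcV n := [ffun j => if j == i then ~~ x j else x j].

Definition hdist x y : nat := #|[set j | x j != y j]|.

Lemma flipK x i : flip (flip x i) i = x.
Proof. by apply/ffunP => j; rewrite !ffunE; case: eqP => // ->; rewrite negbK. Qed.

Lemma flipC x i j : flip (flip x i) j = flip (flip x j) i.
Proof. by apply/ffunP => k; rewrite !ffunE; case: (k == i); case: (k == j). Qed.

Lemma flip_inj x : injective (flip x).
Proof.
move=> i j /ffunP /(_ i); rewrite !ffunE eqxx.
by case: (i =P j) => // _; case: (x i).
Qed.

Lemma flip_neq x i : flip x i != x.
Proof. by apply/eqP => /ffunP /(_ i); rewrite ffunE eqxx; case: (x i). Qed.

Lemma hdist0 x : hdist x x = 0%N.
Proof. by apply/eqP; rewrite cards_eq0; apply/eqP/setP => j; rewrite !inE eqxx. Qed.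

Lemma diff_flip x i : [set j | x j != flip x i j] = [set i].
Proof. by apply/setP => j; rewrite !inE ffunE; case: (j == i); case: (x j). Qed.

Lemma hdist_flip x i : hdist x (flip x i) = 1%N.
Proof. by rewrite /hdist diff_flip cards1. Qed.

Lemma hdist_flip2 x i j : i != j -> hdist x (flip (flip x j) i) = 2%N.
Proof.
move=> ij; rewrite /hdist (_ : [set k | _] = [set i; j]) ?cards2 ?ij //.
apply/setP => k; rewrite !inE !ffunE.
by case: (k =P i) => [->|_]; [rewrite (negbTE ij); case: (x i) | case: (k == j); case: (x k)].
Qed.

Lemma hc_adj_flip x i : hc_adj x (flip x i).
Proof. by rewrite /hc_adj diff_flip cards1. Qed.

Lemma hc_neighbours x : [set y | hc_adj x y] = flip x @: [set: 'I_n].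
Proof.
apply/setP => y; rewrite inE /hc_adj; apply/cards1P/imsetP.
- case=> i /setP Hi; exists i => //; apply/ffunP => j; rewrite ffunE.
  move: (Hi j); rewrite !inE.
  by case: (j =P i) => [->|_] /=; [case: (x i); case: (y i) | move/negbFE/eqP].
- by case=> i _ ->; exists i; rewrite diff_flip.
Qed.

Lemma hc_degE x : hc_deg x = n.
Proof. by rewrite /hc_deg hc_neighbours card_imset ?cardsT ?card_ord //; apply: flip_inj. Qed.

Lemma sum_hc_adj (M : nmodType) x (F : hcV n -> M) :
  \sum_(y | hc_adj x y) F y = \sum_i F (flip x i).
Proof.
rewrite (eq_bigl (mem [set y | hc_adj x y])); last by move=> y; rewrite !inE.
rewrite hc_neighbours big_imset /=; last by move=> i j _ _; apply: flip_inj.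
by apply: eq_bigl => i; rewrite inE.
Qed.

Lemma hc_edges_flip x i : [set x; flip x i] \in hc_edges n.
Proof.
rewrite inE; apply/existsP; exists x; apply/existsP; exists (flip x i).
by rewrite hc_adj_flip eqxx.
Qed.

Lemma hc_edgesP e : e \in hc_edges n -> exists x i, e = [set x; flip x i].
Proof.
rewrite inE => /existsP [x /existsP [y /andP [xy /eqP ->]]].
have : y \in [set y | hc_adj x y] by rewrite inE.
by rewrite hc_neighbours => /imsetP [i _ ->]; exists x, i.
Qed.

End Hypercube.

Lemma sumr_if_eq (R : pzRingType) n (k : 'I_n) (u v : R) :
  \sum_(i < n) (if i == k then u else v) = u + (n%:R - 1) * v.
Proof.
rewrite (bigD1 k) //= eqxx (eq_bigr (fun _ => v)); last by move=> i /negbTE ->.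
rewrite sumr_const cardC1 card_ord -[v *+ _]mulr_natl -subn1 natrB //.
exact: leq_ltn_trans _ (ltn_ord k).
Qed.

Lemma sum_ord2 (M : nmodType) (i j : 'I_2) (F : 'I_2 -> M) :
  i != j -> \sum_k F k = F i + F j.
Proof.
move=> ij; rewrite (bigD1 i) //= (big_pred1 j) // => k /=.
by move: i j k ij => [[|[|?]] ?] [[|[|?]] ?] [[|[|?]] ?].
Qed.

Section SignedLaplacian.
Variables (R : realType) (n : nat) (sigma : {set hcV n} -> R).
Local Notation s x i := (sigma [set x; flip x i]).

Lemma slapE (tau : {set hcV n} -> R) f x :
  slap tau f x = n%:R^-1 * \sum_i (tau [set x; flip x i] * f (flip x i) - f x).
Proof. by rewrite /slap hc_degE sum_hc_adj. Qed.

Hypothesis sigma_sign : is_sign sigma.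

Lemma sign_sqr x i : s x i ^+ 2 = 1.
Proof. by case: (sigma_sign (hc_edges_flip x i)) => ->; rewrite ?sqrrN expr1n. Qed.

Lemma sGammaE f g x :
  sGamma sigma f g x =
  (2 * n%:R)^-1 * \sum_i (s x i * f (flip x i) - f x) * (s x i * g (flip x i) - g x).
Proof.
rewrite /sGamma /lap !slapE invfM -[RHS]mulrA; congr (_ * _).
rewrite !(mulrCA _ n%:R^-1) -!mulrBr; congr (_ * _).
by rewrite !mulr_sumr -!sumrB; apply: eq_bigr => i _; ring: (sign_sqr x i).
Qed.

End SignedLaplacian.

Section OneNegativeEdge.
Variables (R : realType) (n : nat) (sigma : {set hcV n} -> R) (a : hcV n) (i0 : 'I_n).
Hypothesis sigma_sign : is_sign sigma.
Hypothesis sigma_neg : sigma [set a; flip a i0] = -1.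
Hypothesis sigma_pos :
  forall x i, [set x; flip x i] != [set a; flip a i0] -> sigma [set x; flip x i] = 1.

Local Notation N := (n%:R : R).
Local Notation dist := (fun z => (hdist a z)%:R : R).

Lemma dim_neq0 : N != 0.
Proof. by rewrite pnatr_eq0 -lt0n (leq_ltn_trans _ (ltn_ord i0)). Qed.

Lemma sigma_center i : sigma [set a; flip a i] = if i == i0 then -1 else 1.
Proof.
have [->|ne] := eqVneq i i0; first by [].
apply: sigma_pos; apply: contra ne => /eqP E.
have : flip a i \in [set a; flip a i0] by rewrite -E !inE eqxx orbT.
by rewrite !inE (negbTE (flip_neq a i)) => /eqP /flip_inj ->.
Qed.

Lemma sigma_nbr j i : i != j -> sigma [set flip a j; flip (flip a j) i] = 1.
Proof.
move=> ne; apply: sigma_pos; apply: contra ne => /eqP E.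
have : a \in [set flip a j; flip (flip a j) i] by rewrite E !inE eqxx.
rewrite !inE eq_sym (negbTE (flip_neq a j)) => /eqP Ea.
by apply/eqP/(@flip_inj _ a); rewrite {1}Ea flipK.
Qed.

Lemma slap_dist_center : slap sigma dist a = (N - 2) / N.
Proof.
rewrite slapE (eq_bigr (fun i => if i == i0 then -1 else 1)); last first.
  by move=> i _; rewrite sigma_center hdist_flip hdist0; case: (i == i0); lra.
by rewrite sumr_if_eq mulr1 mulrC; congr (_ * _); lra.
Qed.

Lemma slap_dist_nbr j : slap sigma dist (flip a j) = (N - 2) / N.
Proof.
rewrite slapE (eq_bigr (fun i => if i == j then -1 else 1)); last first.
  move=> i _; rewrite hdist_flip; have [->|ne] := eqVneq i j.
    by rewrite flipK hdist0; lra.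
  by rewrite sigma_nbr // hdist_flip2 //; lra.
by rewrite sumr_if_eq mulr1 mulrC; congr (_ * _); lra.
Qed.

Lemma sGamma_dist_center : sGamma sigma dist dist a = 2^-1.
Proof.
rewrite sGammaE // (eq_bigr (fun _ => 1)); last first.
  by move=> i _; rewrite hdist_flip hdist0 mulr1 subr0 -expr2 sign_sqr.
by rewrite sumr_const card_ord -mulr_natr; field; rewrite dim_neq0.
Qed.

Lemma sGamma_dist_nbr j : sGamma sigma dist dist (flip a j) = 2^-1.
Proof.
rewrite sGammaE // (eq_bigr (fun _ => 1)); last first.
  move=> i _; rewrite hdist_flip; have [->|ne] := eqVneq i j.
    by rewrite flipK hdist0 mulr0 sub0r mulrNN mulr1.
  by rewrite sigma_nbr // hdist_flip2 //; lra.
by rewrite sumr_const card_ord -mulr_natr; field; rewrite dim_neq0.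
Qed.

Lemma sGamma2_dist_center : sGamma2 sigma dist dist a = - (N - 2) / N ^+ 2.
Proof.
have lap_Gamma : lap (sGamma sigma dist dist) a = 0.
  rewrite /lap slapE big1 ?mulr0 // => i _.
  by rewrite sGamma_dist_nbr sGamma_dist_center mul1r subrr.
have Gamma_lap : sGamma sigma dist (slap sigma dist) a = (N - 2) / N ^+ 2.
  rewrite sGammaE // (eq_bigr (fun i => if i == i0 then 2 * ((N - 2) / N) else 0)).
    by rewrite sumr_if_eq mulr0 addr0; field; rewrite dim_neq0.
  move=> i _; rewrite slap_dist_nbr slap_dist_center hdist_flip hdist0 sigma_center.
  by case: (i == i0); ring.
by rewrite /sGamma2 lap_Gamma Gamma_lap; field; rewrite dim_neq0.
Qed.

Lemma not_CDsigma0 : (2 < n)%N -> ~ CDsigma sigma 0.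
Proof.
move=> n_gt2 /(_ dist a); rewrite mul0r sGamma2_dist_center.
have N_gt2 : 2 < N by rewrite ltr_nat.
by rewrite mulNr oppr_ge0 leNgt divr_gt0 ?exprn_gt0 ?subr_gt0 // (lt_trans _ N_gt2).
Qed.

End OneNegativeEdge.

Lemma one_negative_edge (R : realType) n (sigma : {set hcV n} -> R) :
  is_sign sigma -> #|[set e in hc_edges n | sigma e == -1]| = 1%N ->
  exists a i0, sigma [set a; flip a i0] = -1 /\
    forall x i, [set x; flip x i] != [set a; flip a i0] -> sigma [set x; flip x i] = 1.
Proof.
move=> sigma_sign /eqP /cards1P [e0 neg_e0].
have : e0 \in [set e in hc_edges n | sigma e == -1] by rewrite neg_e0 set11.
rewrite inE => /andP [/hc_edgesP [a [i0 e0E]] /eqP sigma_e0]; subst e0.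
exists a, i0; split=> // x i ne.
case: (sigma_sign _ (hc_edges_flip x i)) => // sigma_xi.
have : [set x; flip x i] \in [set e in hc_edges n | sigma e == -1].
  by rewrite inE hc_edges_flip sigma_xi eqxx.
by rewrite neg_e0 inE (negbTE ne).
Qed.

Section SmallCubes.
Variable R : realType.

Lemma sGamma2_hc1E (sigma : {set hcV 1} -> R) f x : is_sign sigma ->
  sGamma2 sigma f f x = (f x - sigma [set x; flip x ord0] * f (flip x ord0)) ^+ 2.
Proof.
move=> sigma_sign; rewrite /sGamma2 /lap !sGammaE // !slapE !big_ord1.
rewrite !sGammaE // !big_ord1 !slapE !big_ord1 flipK (setUC [set flip x ord0]).
by field: (sign_sqr sigma_sign x ord0).
Qed.

Lemma CDsigma0_hc1 (sigma : {set hcV 1} -> R) : is_sign sigma -> CDsigma sigma 0.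
Proof. by move=> sigma_sign f x; rewrite mul0r sGamma2_hc1E // sqr_ge0. Qed.

Definition square_gamma2 (s a b c d : R) : R :=
  5 * a ^+ 2 + 3 * b ^+ 2 + 3 * c ^+ 2 + d ^+ 2 - 6 * a * b - 6 * a * c + 2 * b * c
  + (1 + s) * a * d - 2 * b * d - 2 * s * c * d.

Lemma square_gamma2_ge0 s a b c d : s ^+ 2 = 1 -> 0 <= square_gamma2 s a b c d.
Proof.
rewrite /square_gamma2 => /eqP; rewrite sqrf_eq1 => /orP [] /eqP ->.
- have := sqr_ge0 (d - b - c + a); have := sqr_ge0 (a - b); have := sqr_ge0 (a - c).
  lra.
- have := sqr_ge0 (d - b + c); have := sqr_ge0 (2 * b + 2 * c - 3 * a); have := sqr_ge0 a.
  lra.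
Qed.

Section Square.
Variables (sigma : {set hcV 2} -> R) (x : hcV 2) (i j : 'I_2).
Hypotheses (sigma_sign : is_sign sigma) (ij : i != j).
Local Notation xi := (flip x i).
Local Notation xj := (flip x j).
Local Notation z := (flip (flip x i) j).

(* The last three arguments of square_gamma2 are f switched at xi, xj and z so that the
   edges x xi, x xj and xi z become positive: sigma then only enters through the
   balance of the square, the first argument. *)
Lemma sGamma2_hc2E f :
  sGamma2 sigma f f x =
  8^-1 * square_gamma2
    (sigma [set x; xi] * sigma [set x; xj] * sigma [set xi; z] * sigma [set xj; z])
    (f x) (sigma [set x; xi] * f xi) (sigma [set x; xj] * f xj)
    (sigma [set x; xi] * sigma [set xi; z] * f z).
Proof.
have sum2 := sum_ord2 _ ij.
rewrite /sGamma2 /lap !sGammaE // !slapE !sum2 !sGammaE // !slapE !sum2 !flipK.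
rewrite (flipC x j i) !(setUC [set xi] [set x]) !(setUC [set xj] [set x]).
have sign_sqr_xj := sign_sqr sigma_sign xj i; rewrite flipC in sign_sqr_xj.
rewrite /square_gamma2.
by field: (sign_sqr sigma_sign x i) (sign_sqr sigma_sign x j) (sign_sqr sigma_sign xi j)
  sign_sqr_xj.
Qed.

End Square.

Lemma CDsigma0_hc2 (sigma : {set hcV 2} -> R) : is_sign sigma -> CDsigma sigma 0.
Proof.
move=> sigma_sign f x; pose i : 'I_2 := ord0; pose j : 'I_2 := ord_max.
rewrite mul0r (sGamma2_hc2E x sigma_sign (isT : i != j)) mulr_ge0 ?invr_ge0 ?ler0n //.
apply: square_gamma2_ge0.
have sign_sqr_xj := sign_sqr sigma_sign (flip x j) i; rewrite flipC in sign_sqr_xj.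
by rewrite !exprMn sign_sqr_xj !sign_sqr // !mul1r.
Qed.

End SmallCubes.

Theorem propositionA2 (R : realType) (n : nat) (sigma : {set hcV n} -> R) :
  is_sign sigma ->
  #|[set e in hc_edges n | sigma e == -1]| = 1%N ->
  (CDsigma sigma 0 <-> (n = 1%N \/ n = 2%N)).
Proof.
move=> sigma_sign one_neg; split=> [CD0|].
- have [a [i0 [sigma_neg sigma_pos]]] := one_negative_edge sigma_sign one_neg.
  have n_le2 : (n <= 2)%N.
    by rewrite leqNgt; apply/negP => /(not_CDsigma0 sigma_sign sigma_neg sigma_pos).
  have := ltn_ord i0; lia.
- by case=> En; subst n; [apply: CDsigma0_hc1 | apply: CDsigma0_hc2].
Qed.
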